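(* If $K$ is a class of structures with $K\le_c PF$, then $K$ has the substructure property: no $\mathcal{A}_1\in K$ is isomorphic to a substructure of some $\mathcal{A}_2\in K$ unless $\mathcal{A}_1\cong\mathcal{A}_2$.
   Context: Conventions: every structure is for a finite relational language with universe a subset of $\omega$; a class is closed under isomorphism. $D(\mathcal{A})$ is the atomic diagram of $\mathcal{A}$. A computable transformation from $K$ to $K'$ is a c.e. set $\Phi$ of pairs $(\alpha,\varphi)$, $\alpha$ a finite subset of the atomic diagram of a finite structure in the language of $K$, $\varphi$ an atomic sentence or negation of one in the language of $K'$, such that for every $\mathcal{A}\in K$, $\{\varphi:(\exists\alpha\subseteq D(\mathcal{A}))(\alpha,\varphi)\in\Phi\}=D(\mathcal{B})$ for some $\mathcal{B}\in K'$. A computable embedding is a computable transformation with $\mathcal{A}\cong\mathcal{A}'\iff\Phi(\mathcal{A})\cong\Phi(\mathcal{A}')$; $K\le_c K'$ means one exists. $PF$ is the class of finite prime fields (in a relational language). *)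

From Stdlib Require Import Arith List ZArith Znumtheory.
Import ListNotations.
Local Open Scope nat_scope.

(** A finite relational language: the list of arities of its relation
    symbols; symbol [i] has arity [nth i L 0]. *)
Definition language := list nat.

Record structure (L : language) := mkStructure {
  dom : nat -> Prop;
  rel : nat -> list nat -> Prop;
  rel_ok : forall i xs, rel i xs ->
    i < length L /\ length xs = nth i L 0 /\ Forall dom xs
}.
Arguments dom {L} _ _.
Arguments rel {L} _ _ _.

(** Atomic sentences (constants are elements of omega) and literals
    (atomic sentence or its negation: [(a, true)] is [a], [(a, false)] is [~a]). *)
Inductive atom : Type :=
  | AEq : nat -> nat -> atom
  | ARel : nat -> list nat -> atom.

Definition literal := (atom * bool)%type.

Definition atom_consts (a : atom) : list nat :=
  match a with AEq x y => [x; y] | ARel _ xs => xs end.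

Definition atom_in_lang (L : language) (a : atom) : Prop :=
  match a with
  | AEq _ _ => True
  | ARel i xs => i < length L /\ length xs = nth i L 0
  end.

Definition literal_in_lang (L : language) (l : literal) : Prop :=
  atom_in_lang L (fst l).

Definition atom_holds {L} (A : structure L) (a : atom) : Prop :=
  match a with
  | AEq x y => x = y
  | ARel i xs => rel A i xs
  end.

Definition diagram {L} (A : structure L) (l : literal) : Prop :=
  literal_in_lang L l /\ Forall (dom A) (atom_consts (fst l)) /\
  (atom_holds A (fst l) <-> snd l = true).

Definition finite_structure {L} (A : structure L) : Prop :=
  exists s : list nat, forall x, dom A x <-> In x s.

Definition iso {L} (A B : structure L) : Prop :=
  exists f : nat -> nat,
    (forall x, dom A x -> dom B (f x)) /\
    (forall x y, dom A x -> dom A y -> f x = f y -> x = y) /\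
    (forall y, dom B y -> exists x, dom A x /\ f x = y) /\
    (forall i xs, Forall (dom A) xs -> (rel A i xs <-> rel B i (map f xs))).

Definition substructure {L} (C A : structure L) : Prop :=
  (forall x, dom C x -> dom A x) /\
  (forall i xs, Forall (dom C) xs -> (rel C i xs <-> rel A i xs)).

Definition iso_closed {L} (K : structure L -> Prop) : Prop :=
  forall A B, K A -> iso A B -> K B.

(** Computable transformations / embeddings. A set of pairs is c.e. if it is
    the range of a (Rocq, hence computable) enumeration. *)
Definition ce {X : Type} (P : X -> Prop) : Prop :=
  exists f : nat -> option X, forall x, P x <-> exists n, f n = Some x.

Definition Phi_output {L} (Phi : list literal * literal -> Prop)
  (A : structure L) (phi : literal) : Prop :=
  exists alpha, Phi (alpha, phi) /\ Forall (diagram A) alpha.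

Definition computable_transformation {L L' : language}
  (K : structure L -> Prop) (K' : structure L' -> Prop)
  (Phi : list literal * literal -> Prop) : Prop :=
  ce Phi /\
  (forall alpha phi, Phi (alpha, phi) ->
     (exists B : structure L, finite_structure B /\ Forall (diagram B) alpha) /\
     literal_in_lang L' phi) /\
  (forall A, K A -> exists B, K' B /\ forall phi, Phi_output Phi A phi <-> diagram B phi).

Definition computable_embedding {L L' : language}
  (K : structure L -> Prop) (K' : structure L' -> Prop)
  (Phi : list literal * literal -> Prop) : Prop :=
  computable_transformation K K' Phi /\
  forall A A' (B B' : structure L'), K A -> K A' ->
    (forall phi, Phi_output Phi A phi <-> diagram B phi) ->
    (forall phi, Phi_output Phi A' phi <-> diagram B' phi) ->
    (iso A A' <-> iso B B').

Definition le_c {L L' : language}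
  (K : structure L -> Prop) (K' : structure L' -> Prop) : Prop :=
  exists Phi, computable_embedding K K' Phi.

(** Finite prime fields in the relational language with two ternary
    symbols: 0 = graph of addition, 1 = graph of multiplication. *)
Definition LPF : language := [3; 3].

Definition Zp_rel (p : nat) (i : nat) (xs : list nat) : Prop :=
  match xs with
  | [a; b; c] => a < p /\ b < p /\ c < p /\
      ((i = 0 /\ (a + b) mod p = c) \/ (i = 1 /\ (a * b) mod p = c))
  | _ => False
  end.

Lemma Zp_rel_ok p : forall i xs, Zp_rel p i xs ->
  i < length LPF /\ length xs = nth i LPF 0 /\ Forall (fun x => x < p) xs.
Proof.
  intros i xs H. destruct xs as [|a [|b [|c [|d xs]]]]; simpl in H; try tauto.
  destruct H as (Ha & Hb & Hc & [[-> _]|[-> _]]); simpl;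
    repeat split; repeat constructor; auto.
Qed.

Definition Zp_struct (p : nat) : structure LPF :=
  mkStructure LPF (fun x => x < p) (Zp_rel p) (Zp_rel_ok p).

Definition PF (C : structure LPF) : Prop :=
  exists p, prime (Z.of_nat p) /\ iso (Zp_struct p) C.

Definition substructure_property {L} (K : structure L -> Prop) : Prop :=
  forall A1 A2, K A1 -> K A2 ->
    (exists C, substructure C A2 /\ iso A1 C) -> iso A1 A2.

From Stdlib Require Import Arith List ZArith Znumtheory Lia Classical.
Import ListNotations.
Local Open Scope nat_scope.

(** Let [A1 ≅ C ⊆ A2] with [A1, A2 ∈ K], and let [Phi] be a computable
    embedding of [K] into [PF].  Enumeration operators are monotone: the
    diagram of [C] is contained in that of [A2], hence every literal that
    [Phi] outputs on [C] it also outputs on [A2], i.e. [D(Phi(C)) ⊆ D(Phi(A2))].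
    An inclusion of atomic diagrams makes [Phi(C)] a substructure of
    [Phi(A2)].  Both are finite prime fields, and a prime field [Z_p] sitting
    inside a prime field [Z_q] (as graphs of [+] and [*]) must exhaust it:
    it contains [0] and [1] of [Z_q] and is closed under [x ↦ x + 1].  So
    [Phi(C) = Phi(A2)], in particular [Phi(C) ≅ Phi(A2)], and since [Phi]
    reflects isomorphism, [A1 ≅ C ≅ A2]. *)

Lemma iso_trans {L} (A B C : structure L) : iso A B -> iso B C -> iso A C.
Proof.
  intros [f (f_dom & f_inj & f_surj & f_rel)] [g (g_dom & g_inj & g_surj & g_rel)].
  exists (fun x => g (f x)). repeat split.
  - auto.
  - intros x y Hx Hy E. apply f_inj; auto.
  - intros z Hz. destruct (g_surj z Hz) as (y & Hy & <-).
    destruct (f_surj y Hy) as (x & Hx & <-). eauto.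
  - intros Hr. rewrite <- map_map. apply g_rel; [|apply f_rel; auto].
    apply Forall_map. eapply Forall_impl; [|eauto]. auto.
  - intros Hr. rewrite <- map_map in Hr. apply f_rel; auto. apply g_rel; auto.
    apply Forall_map. eapply Forall_impl; [|eauto]. auto.
Qed.

Lemma substructure_full_iso {L} (C A : structure L) :
  substructure C A -> (forall y, dom A y -> dom C y) -> iso C A.
Proof.
  intros [C_dom C_rel] A_dom. exists (fun x => x). repeat split; auto.
  - intros y Hy. eauto.
  - rewrite map_id. apply C_rel; auto.
  - rewrite map_id. apply C_rel; auto.
Qed.

Lemma diagram_substructure {L} (C A : structure L) :
  substructure C A -> forall l, diagram C l -> diagram A l.
Proof.
  intros [C_dom C_rel] [a b] (Hlang & Hconsts & Hholds). split; [exact Hlang|split].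
  - eapply Forall_impl; [|exact Hconsts]. auto.
  - destruct a as [x y | i xs]; simpl in *; [exact Hholds|].
    rewrite <- Hholds. symmetry. apply C_rel. exact Hconsts.
Qed.

Lemma Phi_output_substructure {L} (Phi : list literal * literal -> Prop)
  (C A : structure L) :
  substructure C A -> forall l, Phi_output Phi C l -> Phi_output Phi A l.
Proof.
  intros Hsub l (alpha & Hphi & Halpha). exists alpha. split; [exact Hphi|].
  eapply Forall_impl; [|exact Halpha]. apply diagram_substructure. exact Hsub.
Qed.

(** Conversely, an inclusion of atomic diagrams makes the smaller structure a
    substructure: equalities [x = x] carry the universe, positive and
    negative relational literals carry the relations. *)
Lemma diagram_incl_substructure {L} (B B' : structure L) :
  (forall l, diagram B l -> diagram B' l) -> substructure B B'.
Proof.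
  intros Hincl. split.
  - intros x Hx.
    assert (Hd : diagram B (AEq x x, true)) by (repeat split; simpl; auto).
    destruct (Hincl _ Hd) as (_ & Hconsts & _). inversion Hconsts; auto.
  - intros i xs Hxs. split; intros Hr.
    + destruct (rel_ok _ B i xs Hr) as (Hi & Hlen & _).
      assert (Hd : diagram B (ARel i xs, true)) by (repeat split; simpl; auto).
      destruct (Hincl _ Hd) as (_ & _ & Hholds). apply Hholds. reflexivity.
    + destruct (classic (rel B i xs)) as [|Hn]; [assumption|].
      destruct (rel_ok _ B' i xs Hr) as (Hi & Hlen & _).
      assert (Hd : diagram B (ARel i xs, false)).
      { repeat split; simpl; auto. discriminate. }
      destruct (Hincl _ Hd) as (_ & _ & Hholds). simpl in Hholds.
      apply Hholds in Hr. discriminate.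
Qed.

Lemma Zp_rel_add (p a b c : nat) :
  Zp_rel p 0 [a; b; c] <-> a < p /\ b < p /\ c < p /\ (a + b) mod p = c.
Proof. simpl. intuition lia. Qed.

Lemma Zp_rel_mul (p a b c : nat) :
  Zp_rel p 1 [a; b; c] <-> a < p /\ b < p /\ c < p /\ (a * b) mod p = c.
Proof. simpl. intuition lia. Qed.

Lemma add_idempotent_mod (a q : nat) : a < q -> (a + a) mod q = a -> a = 0.
Proof.
  intros Ha H. pose proof (Nat.div_mod_eq (a + a) q) as E.
  rewrite H in E. destruct ((a + a) / q); nia.
Qed.

Lemma mul_idempotent_mod_prime (a q : nat) : prime (Z.of_nat q) ->
  0 < a -> a < q -> (a * a) mod q = a -> a = 1.
Proof.
  intros Hq Hpos Ha H. pose proof (Nat.div_mod_eq (a * a) q) as E.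
  rewrite H in E. remember ((a * a) / q) as t.
  assert (Hdiv : (Z.of_nat q | Z.of_nat a * (Z.of_nat a - 1))%Z).
  { exists (Z.of_nat t). apply (f_equal Z.of_nat) in E.
    rewrite Nat2Z.inj_add, !Nat2Z.inj_mul in E. nia. }
  destruct (prime_mult _ Hq _ _ Hdiv) as [D|D].
  - apply Z.divide_pos_le in D; lia.
  - destruct (Nat.eq_dec a 1) as [|Hn]; [assumption|].
    apply Z.divide_pos_le in D; lia.
Qed.

(** A copy of [Z_p] (via [f]) inside a structure [B] whose elements all lie
    in a copy of [Z_q] (via [g], reflecting the field graphs) covers that
    whole copy of [Z_q]. *)
Section PrimeFieldRigidity.

Variables (p q : nat) (B : structure LPF) (f g : nat -> nat).
Hypothesis p_prime : prime (Z.of_nat p).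
Hypothesis q_prime : prime (Z.of_nat q).
Hypothesis f_inj : forall x y, x < p -> y < p -> f x = f y -> x = y.
Hypothesis f_rel : forall i xs, Zp_rel p i xs -> rel B i (map f xs).
Hypothesis g_rel : forall i xs,
  Forall (fun a => a < q) xs -> rel B i (map g xs) -> Zp_rel q i xs.
Hypothesis f_in_g : forall x, x < p -> exists a, a < q /\ f x = g a.

Lemma transfer_rel (i x y z a b c : nat) :
  a < q -> b < q -> c < q -> f x = g a -> f y = g b -> f z = g c ->
  Zp_rel p i [x; y; z] -> Zp_rel q i [a; b; c].
Proof.
  intros Ha Hb Hc Ea Eb Ec Hr. apply f_rel in Hr. simpl in Hr.
  rewrite Ea, Eb, Ec in Hr. apply g_rel; [repeat constructor; assumption|exact Hr].
Qed.

(** [f] sends [0] to [0], as the unique additive idempotent. *)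
Lemma f_zero : f 0 = g 0.
Proof.
  pose proof (prime_ge_2 _ p_prime).
  destruct (f_in_g 0) as (a & Ha & Ea); [lia|].
  assert (Hz : Zp_rel q 0 [a; a; a]).
  { apply (transfer_rel 0 0 0 0); auto. apply Zp_rel_add.
    rewrite Nat.Div0.mod_0_l; lia. }
  apply Zp_rel_add in Hz as (_ & _ & _ & Hz).
  rewrite Ea, (add_idempotent_mod a q); auto.
Qed.

(** [f] sends [1] to [1], as the unique nonzero multiplicative idempotent. *)
Lemma f_one : f 1 = g 1.
Proof.
  pose proof (prime_ge_2 _ p_prime).
  destruct (f_in_g 1) as (a & Ha & Ea); [lia|].
  assert (Hz : Zp_rel q 1 [a; a; a]).
  { apply (transfer_rel 1 1 1 1); auto. apply Zp_rel_mul.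
    rewrite Nat.mod_small; lia. }
  apply Zp_rel_mul in Hz as (_ & _ & _ & Hz).
  assert (Hnz : a <> 0).
  { intros ->. rewrite <- f_zero in Ea.
    assert (1 = 0) by (apply f_inj; [lia|lia|exact Ea]). lia. }
  rewrite Ea, (mul_idempotent_mod_prime a q); auto. lia.
Qed.

(** Adding [1] repeatedly: [f] maps the residue of [k] mod [p] to the
    residue of [k] mod [q]. *)
Lemma f_mod (k : nat) : f (k mod p) = g (k mod q).
Proof.
  pose proof (prime_ge_2 _ p_prime). pose proof (prime_ge_2 _ q_prime).
  induction k as [|k IH].
  - rewrite !Nat.Div0.mod_0_l. exact f_zero.
  - destruct (f_in_g (S k mod p)) as (c & Hc & Ec); [apply Nat.mod_upper_bound; lia|].
    assert (Hsucc : forall n, (k mod n + 1) mod n = S k mod n).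
    { intros n. rewrite Nat.Div0.add_mod_idemp_l. f_equal. lia. }
    assert (Hz : Zp_rel q 0 [k mod q; 1; c]).
    { apply (transfer_rel 0 (k mod p) 1 (S k mod p));
        [apply Nat.mod_upper_bound; lia | lia | exact Hc | exact IH | exact f_one
        | exact Ec |].
      apply Zp_rel_add. rewrite Hsucc.
      repeat split; try apply Nat.mod_upper_bound; lia. }
    apply Zp_rel_add in Hz as (_ & _ & _ & Hz).
    rewrite Ec, <- Hz, Hsucc. reflexivity.
Qed.

Lemma g_in_f (a : nat) : a < q -> exists x, x < p /\ f x = g a.
Proof.
  intros Ha. pose proof (prime_ge_2 _ p_prime). exists (a mod p). split.
  - apply Nat.mod_upper_bound. lia.
  - rewrite f_mod, Nat.mod_small by assumption. reflexivity.
Qed.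

End PrimeFieldRigidity.

Lemma PF_substructure_full (B1 B2 : structure LPF) :
  PF B1 -> PF B2 -> substructure B1 B2 -> forall y, dom B2 y -> dom B1 y.
Proof.
  intros [p (Hp & [f (f_dom & f_inj & _ & f_rel)])]
         [q (Hq & [g (_ & _ & g_surj & g_rel)])] [B1_dom B1_rel] y Hy.
  simpl in *.
  assert (f_in_g : forall x, x < p -> exists a, a < q /\ f x = g a).
  { intros x Hx. destruct (g_surj (f x)) as (a & Ha & E); eauto. }
  assert (f_rel2 : forall i xs, Zp_rel p i xs -> rel B2 i (map f xs)).
  { intros i xs Hr. destruct (Zp_rel_ok p i xs Hr) as (_ & _ & Hxs).
    apply B1_rel; [|apply f_rel; assumption].
    apply Forall_map. eapply Forall_impl; [|exact Hxs]. auto. }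
  destruct (g_surj y Hy) as (a & Ha & <-).
  destruct (g_in_f p q B2 f g Hp Hq f_inj f_rel2 (fun i xs Hxs => proj2 (g_rel i xs Hxs))
              f_in_g a Ha) as (x & Hx & <-).
  auto.
Qed.

Theorem proposition3p3 (L : language) (K : structure L -> Prop) :
  iso_closed K -> le_c K PF -> substructure_property K.
Proof.
  intros K_iso [Phi [(_ & _ & Phi_total) Phi_reflects]] A1 A2 HA1 HA2 (C & Hsub & HA1C).
  assert (HC : K C) by exact (K_iso A1 C HA1 HA1C).
  destruct (Phi_total C HC) as (BC & HBC & Phi_C).
  destruct (Phi_total A2 HA2) as (B2 & HB2 & Phi_A2).
  (* [Phi(C)] is a substructure of [Phi(A2)], by monotonicity of [Phi]. *)
  assert (Hsub_img : substructure BC B2).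
  { apply diagram_incl_substructure. intros l Hl.
    apply Phi_A2, (Phi_output_substructure Phi C A2 Hsub), Phi_C, Hl. }
  (* Both are prime fields, so the inclusion is an isomorphism. *)
  assert (Hiso_img : iso BC B2).
  { apply substructure_full_iso; [exact Hsub_img|].
    exact (PF_substructure_full BC B2 HBC HB2 Hsub_img). }
  apply (iso_trans A1 C A2); [exact HA1C|].
  exact (proj2 (Phi_reflects C A2 BC B2 HC HA2 Phi_C Phi_A2) Hiso_img).
Qed.
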